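(* Under the standing assumptions below, for $j=1,\dots,p$ let $z^j=M-(M_j-m_j)e^j$, where $e^j$ is the $j$-th unit vector of $\mathbb{R}^p$. Suppose $(\bar x,\bar y)$ is an optimal solution of (BP) and there is an index $i$ with $f_i(\bar x)=m_i$. Then $$h(\bar x,\bar y)=\varphi(z^i)=\min\{\varphi(z^j)\mid j=1,\dots,p\},$$ and if $\bar z\in\{z^1,\dots,z^p\}$ attains this minimum, then every optimal solution of $MP(\bar z)$ is an optimal solution of (BP).
   Context: Standing assumptions: $X=\{x\in\mathbb{R}^n\mid s(x)\le 0\}$ is nonempty, bounded and convex, where $s:\mathbb{R}^n\to\mathbb{R}^q$ is continuously differentiable with quasiconvex components. $f=(f_1,\dots,f_p):\mathbb{R}^n\to\mathbb{R}^p$ is continuously differentiable with each $f_i$ pseudoconvex; $g:\mathbb{R}^n\times\mathbb{R}^m\to\mathbb{R}^\ell$ is continuously differentiable with quasiconvex components; $h:\mathbb{R}^n\times\mathbb{R}^m\to\mathbb{R}$ is continuous and pseudoconvex. For $a,b\in\mathbb{R}^p$, $a\le b$ means $a_i\le b_i$ for all $i$ and $a<b$ means $a_i<b_i$ for all $i$. $X_{WE}$ denotes the set of $x\in X$ such that there is no $x'\in X$ with $f(x')<f(x)$. Problem (BP): minimize $h(x,y)$ subject to $g(x,y)\le 0$, $y\in\mathbb{R}^m_+$, $x\in X_{WE}$. Let $\mathcal{G}=\{(x,y)\mid x\in X,\ y\in\mathbb{R}^m_+,\ g(x,y)\le 0\}$. Let $m\in\mathbb{R}^p$ be given by $m_i=\min\{f_i(x)\mid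 x\in X\}$, and let $M\in\mathbb{R}^p$ satisfy $f(x)\le M$ for all $x\in X$. For $z\in\mathbb{R}^p$ with $m\le z\le M$, $MP(z)$ is the problem $\min\{h(x,y)\mid (x,y)\in\mathcal{G},\ f(x)\le z\}$ and $\varphi(z)$ is its optimal value ($+\infty$ if infeasible). *)

From HB Require Import structures.
From mathcomp Require Import all_boot all_order all_algebra.
From mathcomp Require Import all_classical all_reals all_analysis.
Set Implicit Arguments. Unset Strict Implicit. Unset Printing Implicit Defensive.
Import Order.TTheory GRing.Theory Num.Theory numFieldNormedType.Exports.
Local Open Scope classical_set_scope.
Local Open Scope ring_scope.

Section Defs.
Variable R : realType.

Definition vle k (a b : 'rV[R]_k) : Prop := forall i, a 0 i <= b 0 i.
Definition vlt k (a b : 'rV[R]_k) : Prop := forall i, a 0 i < b 0 i.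

(* continuously differentiable: differentiable everywhere, and the
   differential depends continuously on the point (tested on every direction;
   in finite dimension this is continuity of x |-> Df(x)) *)
Definition C1 (V W : normedModType R) (F : V -> W) : Prop :=
  (forall x, differentiable F x) /\ (forall v : V, continuous (fun x => 'd F x v)).

Definition convex_set_ (V : lmodType R) (A : set V) : Prop :=
  forall x y (t : R), A x -> A y -> 0 <= t <= 1 -> A (t *: x + (1 - t) *: y).

Definition quasiconvex (V : lmodType R) (F : V -> R) : Prop :=
  forall x y (t : R), 0 <= t <= 1 ->
    F (t *: x + (1 - t) *: y) <= Num.max (F x) (F y).

Definition pseudoconvex_diff (V : normedModType R) (F : V -> R) : Prop :=
  (forall x, differentiable F x) /\
  forall x y, 0 <= 'd F x (y - x) -> F x <= F y.

(* pseudoconvexity of a (possibly nondifferentiable) function, via the upper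
   Dini directional derivative (Diewert): F y < F x implies
   limsup_{t -> 0+} (F (x + t (y - x)) - F x) / t < 0, written out as
   "the difference quotient is eventually <= -delta for some delta > 0" *)
Definition pseudoconvex (V : normedModType R) (F : V -> R) : Prop :=
  forall x y, F y < F x ->
    exists delta : R, 0 < delta /\ exists t0 : R, 0 < t0 /\
      forall t : R, 0 < t < t0 ->
        (F (x + t *: (y - x)) - F x) / t <= - delta.

Variables (n m p q l : nat).
Variables (s : 'rV[R]_n -> 'rV[R]_q) (f : 'rV[R]_n -> 'rV[R]_p)
          (g : 'rV[R]_n * 'rV[R]_m -> 'rV[R]_l) (h : 'rV[R]_n * 'rV[R]_m -> R).

Definition Xset : set 'rV[R]_n := [set x | vle (s x) 0].

Definition XWE : set 'rV[R]_n :=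
  [set x | Xset x /\ ~ (exists x', Xset x' /\ vlt (f x') (f x))].

Definition nonneg_vec k (y : 'rV[R]_k) : Prop := forall i, 0 <= y 0 i.

Definition Gset : set ('rV[R]_n * 'rV[R]_m) :=
  [set xy | Xset xy.1 /\ nonneg_vec xy.2 /\ vle (g xy) 0].

Definition BP_feasible : set ('rV[R]_n * 'rV[R]_m) :=
  [set xy | vle (g xy) 0 /\ nonneg_vec xy.2 /\ XWE xy.1].

Definition BP_optimal (xy : 'rV[R]_n * 'rV[R]_m) : Prop :=
  BP_feasible xy /\ forall xy', BP_feasible xy' -> h xy <= h xy'.

Definition MP_feasible (z : 'rV[R]_p) : set ('rV[R]_n * 'rV[R]_m) :=
  [set xy | Gset xy /\ vle (f xy.1) z].

Definition MP_optimal (z : 'rV[R]_p) (xy : 'rV[R]_n * 'rV[R]_m) : Prop :=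
  MP_feasible z xy /\ forall xy', MP_feasible z xy' -> h xy <= h xy'.

(* optimal value of MP(z), +oo if infeasible (ereal_inf set0 = +oo) *)
Definition phi (z : 'rV[R]_p) : \bar R :=
  ereal_inf [set (h xy)%:E | xy in MP_feasible z].

Definition zvec (mv Mv : 'rV[R]_p) (j : 'I_p) : 'rV[R]_p :=
  Mv - (Mv 0 j - mv 0 j) *: delta_mx 0 j.

End Defs.

(* The argument is purely order-theoretic; none of the convexity or
   smoothness assumptions are needed.
   - Since m_j is the minimum of f_j over X, the constraint f_j(x) <= m_j of
     MP(z^j) forbids any x' in X with f(x') < f(x): MP(z^j)-feasible points
     are (BP)-feasible, hence h(xb, yb) <= phi(z^j) for every j.
   - Conversely, a (BP)-feasible point with f_i(x) = m_i is MP(z^i)-feasible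
     (the other components are bounded by M), so h(xb, yb) = phi(z^i).
   - So phi(z^i) is the least of the phi(z^j); an optimal point of MP(z^k)
     with phi(z^k) minimal realises the value h(xb, yb) and is (BP)-feasible,
     hence (BP)-optimal. *)
From HB Require Import structures.
From mathcomp Require Import all_boot all_order all_algebra.
From mathcomp Require Import all_classical all_reals all_analysis.
Import Order.TTheory GRing.Theory Num.Theory numFieldNormedType.Exports.
Local Open Scope classical_set_scope.
Local Open Scope ring_scope.
Set Implicit Arguments. Unset Strict Implicit.

Lemma zvecE (R : realType) (p : nat) (mv Mv : 'rV[R]_p) (j k : 'I_p) :
  zvec mv Mv j 0 k = if k == j then mv 0 j else Mv 0 k.
Proof.
rewrite /zvec !mxE /=; case: (eqVneq k j) => [->|_].
  by rewrite mulr1 opprB addrC subrK.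
by rewrite mulr0 subr0.
Qed.

Lemma bigmin_attained (R : realType) (p : nat) (F : 'I_p -> \bar R) (i : 'I_p) :
  (forall j, (F i <= F j)%E) -> \big[mine/+oo%E]_(j < p) F j = F i.
Proof.
move=> Fi_min; apply/le_anti/andP; split.
  by rewrite (bigD1 i) //= ge_min lexx.
apply: (big_ind (fun x => F i <= x)%E) => //; first exact: leey.
by move=> x y Fix Fiy; rewrite le_min Fix Fiy.
Qed.

Section ScalarizedProblems.
Variables (R : realType) (n m p q l : nat)
  (s : 'rV[R]_n -> 'rV[R]_q) (f : 'rV[R]_n -> 'rV[R]_p)
  (g : 'rV[R]_n * 'rV[R]_m -> 'rV[R]_l) (h : 'rV[R]_n * 'rV[R]_m -> R).

Lemma MP_optimal_value z xy :
  MP_optimal s f g h z xy -> (h xy)%:E = phi s f g h z.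
Proof.
move=> [feas_xy opt_xy]; apply/le_anti/andP; split.
  by apply: le_ereal_inf_tmp => _ [xy' feas' <-]; rewrite lee_fin; exact: opt_xy.
by apply: ereal_inf_lbound; exists xy.
Qed.

Variables (mv Mv : 'rV[R]_p).

Hypothesis mv_lower : forall j x, Xset s x -> mv 0 j <= f x 0 j.

(* The constraint f_j(x) <= m_j forces weak efficiency. *)
Lemma MP_feasible_BP_feasible j xy :
  MP_feasible s f g (zvec mv Mv j) xy -> BP_feasible s f g xy.
Proof.
move=> [[X_x [y_ge0 g_le0]] f_le_z]; do 3 split => //.
move=> [x' [X_x' f_lt]].
have fj_le_mj : f xy.1 0 j <= mv 0 j by have := f_le_z j; rewrite zvecE eqxx.
have := lt_le_trans (f_lt j) (le_trans fj_le_mj (mv_lower j X_x')).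
by rewrite ltxx.
Qed.

Lemma BP_optimal_le_phi j xy :
  BP_optimal s f g h xy -> ((h xy)%:E <= phi s f g h (zvec mv Mv j))%E.
Proof.
move=> [_ opt_xy]; apply: le_ereal_inf_tmp => _ [xy' feas' <-].
by rewrite lee_fin; apply: opt_xy; exact: MP_feasible_BP_feasible feas'.
Qed.

Hypothesis Mv_upper : forall x, Xset s x -> vle (f x) Mv.

Lemma BP_feasible_MP_feasible j xy :
  BP_feasible s f g xy -> f xy.1 0 j = mv 0 j ->
  MP_feasible s f g (zvec mv Mv j) xy.
Proof.
move=> [g_le0 [y_ge0 [X_x _]]] fj_eq; split; first by [].
move=> k; rewrite zvecE; case: eqP => [->|_]; first by rewrite fj_eq.
exact: Mv_upper.
Qed.

Lemma BP_optimal_phi i xy :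
  BP_optimal s f g h xy -> f xy.1 0 i = mv 0 i ->
  (h xy)%:E = phi s f g h (zvec mv Mv i).
Proof.
move=> opt_xy fi_eq; apply/le_anti/andP; split.
  exact: BP_optimal_le_phi.
apply: ereal_inf_lbound; exists xy => //.
by apply: BP_feasible_MP_feasible fi_eq; case: opt_xy.
Qed.

End ScalarizedProblems.

Theorem lemma5p2 (R : realType) (n m p q l : nat)
  (s : 'rV[R]_n -> 'rV[R]_q) (f : 'rV[R]_n -> 'rV[R]_p)
  (g : 'rV[R]_n * 'rV[R]_m -> 'rV[R]_l) (h : 'rV[R]_n * 'rV[R]_m -> R)
  (* standing assumptions *)
  (hXne : Xset s !=set0)
  (hXbd : bounded_set (Xset s))
  (hXcv : convex_set_ (Xset s))
  (hsC1 : C1 s)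
  (hsq : forall k : 'I_q, quasiconvex (fun x => s x 0 k))
  (hfC1 : C1 f)
  (hfp : forall i : 'I_p, pseudoconvex_diff (fun x => f x 0 i))
  (hgC1 : C1 g)
  (hgq : forall k : 'I_l, quasiconvex (fun xy => g xy 0 k))
  (hhc : continuous h)
  (hhp : pseudoconvex h)
  (* the ideal point m and an upper bound M *)
  (mv Mv : 'rV[R]_p)
  (hm : forall i : 'I_p,
     (exists x, Xset s x /\ f x 0 i = mv 0 i) /\
     (forall x, Xset s x -> mv 0 i <= f x 0 i))
  (hM : forall x, Xset s x -> vle (f x) Mv)
  (* the lemma *)
  (xb : 'rV[R]_n) (yb : 'rV[R]_m)
  (hopt : BP_optimal s f g h (xb, yb))
  (i : 'I_p) (hi : f xb 0 i = mv 0 i) :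
  ((h (xb, yb))%:E = phi s f g h (zvec mv Mv i) /\
   phi s f g h (zvec mv Mv i) = \big[mine/+oo%E]_(j < p) phi s f g h (zvec mv Mv j)) /\
  (forall k : 'I_p,
     phi s f g h (zvec mv Mv k) = \big[mine/+oo%E]_(j < p) phi s f g h (zvec mv Mv j) ->
     forall xy, MP_optimal s f g h (zvec mv Mv k) xy -> BP_optimal s f g h xy).
Proof.
have mv_lower : forall j x, Xset s x -> mv 0 j <= f x 0 j by move=> j; case: (hm j).
have val_i := BP_optimal_phi mv_lower hM hopt hi.
have min_i : \big[mine/+oo%E]_(j < p) phi s f g h (zvec mv Mv j)
             = phi s f g h (zvec mv Mv i).
  by apply: bigmin_attained => j; rewrite -val_i; exact: BP_optimal_le_phi.
split; first by rewrite min_i.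
move=> k; rewrite min_i -val_i => phi_k xy opt_xy.
split; first by apply: MP_feasible_BP_feasible (opt_xy.1).
move=> xy' feas'; apply: (@le_trans _ _ (h (xb, yb))); last exact: hopt.2.
by rewrite -lee_fin (MP_optimal_value opt_xy) phi_k.
Qed.
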